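(* Let $n,d,a$ be positive integers and $p$ a prime. Suppose that every point $Q\in\mathcal{V}_d\subseteq\mathbb{C}^n$ with $\mathcal{P}_1(Q)=0$ is $p$-symmetric. Let $g:=\gcd(d,n)$ and assume $p\mid g$. Then $(n,d,a)$ is bad if and only if $g\nmid a$.
   Context: $\mathcal{V}_d=\{(z_1,\dots,z_n)\in\mathbb{C}^n: z_i^d=1\ \forall i,\ z_n=1\}$ and $\mathcal{P}_1=x_1+\dots+x_n$. A point $Q=(z_1,\dots,z_n)$ whose coordinates are $d$-th roots of unity is $v$-symmetric if, for a primitive $v$-th root of unity $\epsilon$, there is a permutation $\tau\in\mathfrak{S}_n$ with $(\epsilon z_1,\dots,\epsilon z_n)=(z_{\tau(1)},\dots,z_{\tau(n)})$. Let $R=\mathbb{C}[x_1,\dots,x_n]$, and $R_a^{\mathfrak{S}_n}$ the symmetric polynomials homogeneous of degree $a$. A triple $(n,d,a)$ is good if there exists $f\in R_a^{\mathfrak{S}_n}$ such that $x_1^d-x_n^d,\dots,x_{n-1}^d-x_n^d,f$ is a regular sequence (equivalently, $f$ has no zero on $\mathcal{V}_d$); otherwise it is bad. *)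

From mathcomp Require Import all_boot all_algebra all_fingroup.
From mathcomp Require Import Rstruct.
From mathcomp.real_closed Require Import complex.
From mathcomp Require Import mpoly.

Set Implicit Arguments.
Unset Strict Implicit.
Unset Printing Implicit Defensive.

Import GRing.Theory.
Local Open Scope ring_scope.

Definition C : numClosedFieldType := complex Rdefinitions.R.

(* V_d = { z in C^n : z_i^d = 1 for all i, z_n = 1 } (z_n = last coordinate,
   index n-1 in 'I_n). *)
Definition in_Vd (n d : nat) (z : 'I_n -> C) : Prop :=
  (forall i : 'I_n, z i ^+ d = 1) /\
  (forall i : 'I_n, nat_of_ord i = n.-1 -> z i = 1).

Definition P1 (n : nat) (z : 'I_n -> C) : C := \sum_(i < n) z i.

Definition v_symmetric (n v : nat) (z : 'I_n -> C) : Prop :=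
  exists eps : C, v.-primitive_root eps /\
    exists tau : 'S_n, forall i : 'I_n, eps * z i = z (tau i).

(* (n,d,a) is good: some symmetric f homogeneous of degree a has no zero on
   V_d (the characterization of goodness given in the paper's definition). *)
Definition good (n d k : nat) : Prop :=
  exists f : {mpoly C[n]},
    [/\ f \is symmetric, f \is k.-homog &
        forall z : 'I_n -> C, in_Vd d z -> f.@[z] != 0].

Definition bad (n d a : nat) : Prop := ~ good n d a.

(* The point z = (zeta, zeta^2, ..., zeta^n), zeta a primitive gcd(d,n)-th
   root of unity, lies in V_d, and multiplying it by zeta permutes its
   coordinates cyclically; a symmetric form f of degree a thus satisfies
   f(z) = zeta^a f(z), so f vanishes at z unless gcd(d,n) | a.
   Conversely, let gcd(d,n) | a and J = log_p a. If the power sums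
   P_(p^j)(z), j <= J, all vanish at a point z of V_d, the hypothesis applied
   to z, z^p, z^(p^2), ... makes z p^(J+1)-symmetric, by comparing the
   multiplicities of the coordinates of z and z^p; then p^(J+1) divides
   gcd(d,n) and hence a, which is absurd. So some P_(p^j)^(a/p^j) does not
   vanish at z, and a generic linear combination of these finitely many forms
   vanishes nowhere on V_d. *)

From mathcomp Require Import all_boot all_order all_algebra all_fingroup.
From mathcomp Require Import all_solvable all_field.
From mathcomp Require Import mpoly.
Set Implicit Arguments.
Unset Strict Implicit.
Unset Printing Implicit Defensive.
Import Order.TTheory GRing.Theory Num.Theory.
Local Open Scope ring_scope.

Section Evaluation.
Variables (R : comNzRingType) (n : nat).
Implicit Types (q : {mpoly R[n]}) (v : 'I_n -> R).

Lemma meval_msym v (s : 'S_n) q : (msym s q).@[v] = q.@[v \o s].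
Proof.
rewrite /msym /mmap raddf_sum mevalE /=; apply: eq_bigr => m _.
rewrite mevalM mevalC /mmap1 rmorph_prod; congr (_ * _); apply: eq_bigr => i _.
by rewrite rmorphXn /= mevalXU.
Qed.

Lemma meval_perm_sym v (s : 'S_n) q : q \is symmetric -> q.@[v \o s] = q.@[v].
Proof. by move=> /issymP q_sym; rewrite -meval_msym q_sym. Qed.

Lemma meval_homog_scale v (c : R) k q :
  q \is k.-homog -> q.@[fun i => c * v i] = c ^+ k * q.@[v].
Proof.
move=> /dhomogP q_hom; rewrite !mevalE big_distrr /= !big_seq.
apply: eq_bigr => m qm.
have -> : k = (\sum_i m i)%N by rewrite -(q_hom m qm); exact: mdegE.
rewrite mulrCA -prodrXr -big_split; congr (_ * _).
by apply: eq_bigr => i _; rewrite exprMn.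
Qed.

Definition mpowsum k : {mpoly R[n]} := \sum_(i < n) 'X_i ^+ k.

Lemma meval_mpowsum k v : (mpowsum k).@[v] = \sum_(i < n) v i ^+ k.
Proof.
by rewrite rmorph_sum; apply: eq_bigr => i _; rewrite rmorphXn /= mevalXU.
Qed.

Lemma mpowsum_sym k : mpowsum k \is symmetric.
Proof.
apply/issymP => s; rewrite rmorph_sum (reindex_inj (@perm_inj _ s^-1)).
by apply: eq_bigr => i _; rewrite rmorphXn /= /msym mmapX mmap1U permKV.
Qed.

Lemma mpowsum_homog k : mpowsum k \is k.-homog.
Proof.
apply: rpred_sum => i _.
have X_hom : ('X_i : {mpoly R[n]}) \is 1.-homog by rewrite dhomogX /= mdeg1.
by have := dhomogMn k X_hom; rewrite mul1n.
Qed.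

End Evaluation.

Arguments mpowsum {R n} k.

Lemma exists_notin (R : numDomainType) (s : seq R) : exists t : R, t \notin s.
Proof.
suff [M M_ge0 M_gt] : exists2 M : R, 0 <= M & forall x, x \in s -> `|x| < M.
  by exists M; apply/negP => /M_gt; rewrite ger0_norm ?ltxx.
elim: s => [|y s [M M_ge0 M_gt]]; first by exists 1.
exists (`|y| + M + 1) => [|x]; first by rewrite !addr_ge0.
rewrite inE -addrA => /predU1P [->|/M_gt xs]; first by rewrite ltrDl ltr_wpDl.
by rewrite ltr_wpDl // ltr_wpDr.
Qed.

Section Combination.
Variables (R : numFieldType) (n : nat) (S : {pred {mpoly R[n]}}).
Hypotheses (S0 : 0 \in S)
  (S_comb : forall f g (t : R), f \in S -> g \in S -> f + t *: g \in S).

Lemma nonvanishing_combination (K : finType) (pt : K -> 'I_n -> R) :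
  (forall k, exists2 f, f \in S & f.@[pt k] != 0) ->
  exists2 f, f \in S & forall k, f.@[pt k] != 0.
Proof.
move=> nonvanishing.
suff [f Sf f_nz] :
    exists2 f, f \in S & forall k, k \in enum K -> f.@[pt k] != 0.
  by exists f => // k; rewrite f_nz ?mem_enum.
elim: (enum K) => [|k ks [F SF F_nz]]; first by exists 0.
have [g Sg g_nz] := nonvanishing k.
have [t t_new] := exists_notin [seq - F.@[pt j] / g.@[pt j] | j <- k :: ks].
exists (F + t *: g) => [|j]; first exact: S_comb.
rewrite mevalD mevalZ; have [g0|gj_nz] := eqVneq g.@[pt j] 0.
  rewrite g0 mulr0 addr0 inE => /predU1P [jk|]; last exact: F_nz.
  by rewrite -jk g0 eqxx in g_nz.
move=> jks; apply: contraNneq t_new => /eqP; rewrite addr_eq0 => /eqP Ft.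
by apply/mapP; exists j; rewrite // Ft opprK mulfK.
Qed.

End Combination.

Lemma prim_root_neq0 (R : idomainType) m (x : R) :
  m.-primitive_root x -> x != 0.
Proof.
by move=> x_prim; rewrite (prim_root_eq0 x_prim) -lt0n (prim_order_gt0 x_prim).
Qed.

Lemma prim_root_exists (R : numClosedFieldType) m :
  (0 < m)%N -> exists z : R, m.-primitive_root z.
Proof.
move=> m_gt0; have [r Xm1_eq] := closed_field_poly_normal ('X^m - 1 : {poly R}).
rewrite lead_coefXnsubC // scale1r in Xm1_eq.
have r_unity : all m.-unity_root r.
  by apply/allP => z; rewrite -root_prod_XsubC -Xm1_eq.
have r_size : (m < (size r).+1)%N.
  by rewrite -(size_prod_XsubC r id) -Xm1_eq size_XnsubC.
have r_uniq : uniq r.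
  rewrite -separable_prod_XsubC -Xm1_eq separable_Xn_sub_1 //.
  by rewrite pnatr_eq0 -lt0n.
by have /hasP[z _] := has_prim_root m_gt0 r_unity r_uniq r_size; exists z.
Qed.

Lemma prim_root_expr_lift (R : idomainType) p k (e : R) : prime p ->
  (p ^ k.+1).-primitive_root (e ^+ p) -> (p ^ k.+2).-primitive_root e.
Proof.
move=> p_pr ep_prim.
have pk_gt0 : (0 < p ^ k.+2)%N by rewrite expn_gt0 prime_gt0.
have : e ^+ (p ^ k.+2)%N = 1 by rewrite expnS exprM prim_expr_order.
case/(prim_order_exists pk_gt0) => m e_prim.
case/(dvdn_pfactor _ _ p_pr) => j; rewrite leq_eqVlt ltnS.
case/predU1P => [-> <- // | j_le m_eq]; suff : (p ^ k.+1 %| p ^ k)%N.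
  by rewrite dvdn_Pexp2l ?prime_gt1 // ltnn.
rewrite (prim_order_dvd ep_prim) -exprM -expnS -(prim_order_dvd e_prim) m_eq.
by rewrite dvdn_Pexp2l ?prime_gt1.
Qed.

Section Multiplicity.
Variables (F : fieldType) (n : nat).
Implicit Types (z : 'I_n -> F) (e u v : F).

Definition multiplicity z v : nat := \sum_(i < n) (z i == v).

Lemma multiplicity_codom z v : multiplicity z v = count_mem v (codom z).
Proof.
rewrite /codom count_map -sum1_count big_enum_cond /= big_mkcond /=.
by apply: eq_bigr => i _; case: eqP.
Qed.

Lemma multiplicity_scale z e (tau : 'S_n) :
  e != 0 -> (forall i, e * z i = z (tau i)) ->
  forall v, multiplicity z (e * v) = multiplicity z v.
Proof.
move=> e_nz ez v; rewrite /multiplicity (reindex_inj (@perm_inj _ tau)) /=.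
by apply: eq_bigr => i _; rewrite -ez (inj_eq (mulfI e_nz)).
Qed.

Lemma multiplicity_scaleX z e (tau : 'S_n) :
  e != 0 -> (forall i, e * z i = z (tau i)) ->
  forall k v, multiplicity z (e ^+ k * v) = multiplicity z v.
Proof.
move=> e_nz ez; elim=> [|k IHk] v; first by rewrite mul1r.
by rewrite exprS -mulrA (multiplicity_scale e_nz ez).
Qed.

Lemma scale_perm_of_multiplicity z e :
  e != 0 -> (forall v, multiplicity z (e * v) = multiplicity z v) ->
  exists tau : 'S_n, forall i, e * z i = z (tau i).
Proof.
move=> e_nz ez.
have : perm_eq [tuple e * z i | i < n] [tuple z i | i < n].
  apply/allP => w _; rewrite /= -!/(codom _) -!multiplicity_codom.
  rewrite -{2}[w](divfK e_nz) mulrC ez.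
  apply/eqP/eq_bigr => i _; congr nat_of_bool.
  by rewrite -[RHS](inj_eq (mulfI e_nz)) [e * (w / e)]mulrC divfK.
case/tuple_permP => tau tau_eq; exists tau => i.
by have := congr1 (nth 0 ^~ i) tau_eq; rewrite -!tnth_nth !tnth_mktuple.
Qed.

Lemma expr_eq_count p (eps u x : F) : p.-primitive_root eps -> u != 0 ->
  (x ^+ p == u ^+ p : nat) = (\sum_(k < p) (x == eps ^+ k * u)%R)%N.
Proof.
move=> eps_prim u_nz; have [xu_p|xu_p] := eqVneq (x ^+ p) (u ^+ p); last first.
  rewrite big1 // => k _; apply/eqP; rewrite eqb0; apply: contra_neq xu_p => ->.
  by rewrite exprMn -exprM mulnC exprM (prim_expr_order eps_prim) expr1n mul1r.
have /(prim_rootP eps_prim)[k0 x_eq] : (x / u) ^+ p = 1.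
  by rewrite exprMn xu_p exprVn divff // expf_neq0.
have {x_eq}-> : x = eps ^+ k0 * u by rewrite -x_eq divfK.
rewrite (bigD1 k0) //= eqxx big1 // => k /negPf k_neq.
rewrite (inj_eq (mulIf u_nz)) (eq_prim_root_expr eps_prim) !modn_small //.
by rewrite -[_ == _ :> nat]/(k0 == k) eq_sym k_neq.
Qed.

Lemma multiplicity_expr p (eps : F) z (tau : 'S_n) u :
  p.-primitive_root eps -> (forall i, eps * z i = z (tau i)) -> u != 0 ->
  multiplicity (fun i => z i ^+ p) (u ^+ p) = (p * multiplicity z u)%N.
Proof.
move=> eps_prim eps_z u_nz; have eps_nz := prim_root_neq0 eps_prim.
rewrite /multiplicity (eq_bigr _ (fun i _ => expr_eq_count _ eps_prim u_nz)).
rewrite exchange_big /= -[p in RHS]card_ord -sum_nat_const.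
by apply: eq_bigr => k _; apply: (multiplicity_scaleX eps_nz eps_z).
Qed.

End Multiplicity.

Lemma v_symmetric_lift n p k (z : 'I_n -> C) : prime p ->
  v_symmetric p z -> v_symmetric (p ^ k.+1) (fun i => z i ^+ p) ->
  v_symmetric (p ^ k.+2) z.
Proof.
move=> p_pr [eps [eps_prim [tau eps_z]]] [e' [e'_prim [sigma e'_zp]]].
have p_gt0 := prime_gt0 p_pr; pose e := p.-root e'.
have e_p : e ^+ p = e' by rewrite rootCK.
have e_prim : (p ^ k.+2).-primitive_root e.
  by apply: prim_root_expr_lift; rewrite ?e_p.
have e_nz := prim_root_neq0 e_prim; have e'_nz := prim_root_neq0 e'_prim.
exists e; split => //; apply: scale_perm_of_multiplicity => // v.
have [-> | v_nz] := eqVneq v 0; first by rewrite mulr0.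
apply/eqP; rewrite -(eqn_pmul2l p_gt0); apply/eqP.
(* [p * mult z u = mult z^p u^p], and z^p is invariant under [e' = e^p]. *)
rewrite -(multiplicity_expr eps_prim eps_z v_nz).
rewrite -(multiplicity_expr eps_prim eps_z (mulf_neq0 e_nz v_nz)).
by rewrite exprMn e_p (multiplicity_scale e'_nz e'_zp).
Qed.

Lemma in_Vd_expr n d m (z : 'I_n -> C) :
  in_Vd d z -> in_Vd d (fun i => z i ^+ m).
Proof.
case=> z_d z_last; split=> i; last by move/z_last->; rewrite expr1n.
by rewrite exprAC z_d expr1n.
Qed.

Lemma v_symmetric_dvdn_gcd n d m (z : 'I_n -> C) : (0 < n)%N -> (0 < d)%N ->
  in_Vd d z -> v_symmetric m z -> (m %| gcdn d n)%N.
Proof.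
move=> n_gt0 d_gt0 [z_d _] [e [e_prim [tau e_z]]].
have z_nz i : z i != 0.
  apply: contra_eq_neq (z_d i) => ->.
  by rewrite expr0n gtn_eqF // eq_sym oner_neq0.
rewrite dvdn_gcd !(prim_order_dvd e_prim); apply/andP; split.
  by have := z_d (tau (Ordinal n_gt0)); rewrite -e_z exprMn z_d mulr1 => ->.
have : \prod_i (e * z i) = \prod_i z i.
  by rewrite [RHS](reindex_inj (@perm_inj _ tau)); apply: eq_bigr => i _.
have prod_nz : \prod_i z i != 0 by apply/prodf_neq0 => i _.
by rewrite big_split prodr_const card_ord -[RHS]mul1r => /(mulIf prod_nz)->.
Qed.

Lemma bad_of_not_gcd_dvdn n d a : (0 < n)%N -> (0 < d)%N ->
  ~~ (gcdn d n %| a)%N -> bad n d a.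
Proof.
move=> n_gt0 d_gt0 g_ndvd [f [f_sym f_hom f_nz]].
have g_gt0 : (0 < gcdn d n)%N by rewrite gcdn_gt0 d_gt0.
have [zeta zeta_prim] := prim_root_exists C g_gt0.
have zeta_n : zeta ^+ n = 1.
  by apply/eqP; rewrite -(prim_order_dvd zeta_prim) dvdn_gcdr.
have zeta_d : zeta ^+ d = 1.
  by apply/eqP; rewrite -(prim_order_dvd zeta_prim) dvdn_gcdl.
pose z (i : 'I_n) := zeta ^+ i.+1.
have z_Vd : in_Vd d z.
  split=> i; rewrite /z; last by move->; rewrite prednK.
  by rewrite exprAC zeta_d expr1n.
pose shift := perm (@ordS_inj n).
have zeta_z i : zeta * z i = z (shift i).
  by rewrite permE /z /= [RHS]exprS expr_mod.
have : f.@[z] = zeta ^+ a * f.@[z].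
  rewrite -meval_homog_scale // -[LHS](meval_perm_sym z shift f_sym).
  exact: meval_eq.
apply/eqP; rewrite -subr_eq0 -[X in X - _]mul1r -mulrBl mulf_eq0.
rewrite (negbTE (f_nz z z_Vd)) orbF subr_eq0 eq_sym -(prim_order_dvd zeta_prim).
exact: g_ndvd.
Qed.

Section ZeroSumSymmetry.
Variables (n d p : nat).
Hypotheses (n_gt0 : (0 < n)%N) (d_gt0 : (0 < d)%N) (p_pr : prime p).
Hypothesis zero_sum_sym :
  forall z : 'I_n -> C, in_Vd d z -> P1 z = 0 -> v_symmetric p z.

Lemma v_symmetric_of_power_sums_vanish k (z : 'I_n -> C) : in_Vd d z ->
  (forall j, (j <= k)%N -> P1 (fun i => z i ^+ (p ^ j)) = 0) ->
  v_symmetric (p ^ k.+1) z.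
Proof.
elim: k z => [|k IHk] z z_Vd zero_sums;
  have z_sym : v_symmetric p z
    by apply: zero_sum_sym; rewrite -?(zero_sums 0%N).
  by rewrite expn1.
apply: v_symmetric_lift => //; apply: IHk => [|j j_le]; first exact: in_Vd_expr.
rewrite -(zero_sums j.+1) //; apply: eq_bigr => i _.
by rewrite -exprM -expnS.
Qed.

Lemma exists_sym_homog_nonvanishing k (z : 'I_n -> C) :
  (0 < k)%N -> (gcdn d n %| k)%N -> in_Vd d z ->
  exists f : {mpoly C[n]}, [/\ f \is symmetric, f \is k.-homog & f.@[z] != 0].
Proof.
move=> k_gt0 g_dvd z_Vd; pose J := logn p k.
have [/existsP[j zj_sum]|/existsPn zero_sums] :=
  boolP [exists j : 'I_J.+1, P1 (fun i => z i ^+ (p ^ j)) != 0]; last first.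
  have /(v_symmetric_of_power_sums_vanish z_Vd) z_sym : forall j, (j <= J)%N ->
      P1 (fun i => z i ^+ (p ^ j)) = 0.
    by move=> j j_le; move/negPn/eqP: (zero_sums (@Ordinal J.+1 j j_le)).
  have := dvdn_trans (v_symmetric_dvdn_gcd n_gt0 d_gt0 z_Vd z_sym) g_dvd.
  by rewrite pfactor_dvdn // ltnn.
have pj_dvd : (p ^ j %| k)%N by rewrite pfactor_dvdn // -ltnS.
exists (mpowsum (p ^ j) ^+ (k %/ p ^ j)); split.
- exact/rpredX/mpowsum_sym.
- by rewrite -{2}(divnK pj_dvd) mulnC dhomogMn ?mpowsum_homog.
- by rewrite rmorphXn /= meval_mpowsum expf_neq0.
Qed.

Lemma good_of_gcd_dvdn k : (0 < k)%N -> (gcdn d n %| k)%N -> good n d k.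
Proof.
move=> k_gt0 g_dvd; have [zeta zeta_prim] := prim_root_exists C d_gt0.
(* [pt] parametrises V_d by exponent vectors, so V_d is finite. *)
pose pt (e : {ffun 'I_n -> 'I_d}) (i : 'I_n) :=
  if i == n.-1 :> nat then 1 else zeta ^+ e i.
have pt_Vd e : in_Vd d (pt e).
  split=> i; rewrite /pt; last by move->; rewrite eqxx.
  case: ifP => _; first by rewrite expr1n.
  by rewrite exprAC (prim_expr_order zeta_prim) expr1n.
pose S := [pred f : {mpoly C[n]} | (f \is symmetric) && (f \is k.-homog)].
have [f /andP[f_sym f_hom] f_nz] :
    exists2 f, f \in S & forall e, f.@[pt e] != 0.
  apply: nonvanishing_combination => [|f g t /andP[? ?] /andP[? ?]|e].
  - by rewrite inE !rpred0.
  - by rewrite inE /= !rpredD ?rpredZ.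
  - have [f [? ? ?]] := exists_sym_homog_nonvanishing k_gt0 g_dvd (pt_Vd e).
    by exists f; rewrite // inE; apply/andP.
exists f; split=> // z z_Vd.
pose e := [ffun i => sval (prim_rootP zeta_prim (z_Vd.1 i))].
rewrite (@meval_eq _ _ _ (pt e)) // => i; rewrite /pt /e ffunE.
by case: ifP => [/eqP/z_Vd.2 // | _]; case: prim_rootP.
Qed.

End ZeroSumSymmetry.

Theorem proposition3p19 (n d a p : nat) :
  (0 < n)%N -> (0 < d)%N -> (0 < a)%N -> prime p ->
  (forall z : 'I_n -> C, in_Vd d z -> P1 z = 0%R -> v_symmetric p z) ->
  (p %| gcdn d n)%N ->
  (bad n d a <-> ~~ (gcdn d n %| a)%N).
Proof.
move=> n_gt0 d_gt0 a_gt0 p_pr zero_sum_sym _.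
split=> [a_bad | ]; last exact: bad_of_not_gcd_dvdn.
apply/negP => g_dvd; apply: a_bad.
exact: (good_of_gcd_dvdn n_gt0 d_gt0 p_pr zero_sum_sym a_gt0 g_dvd).
Qed.
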